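(* Let $(X,d)$ be a bicomplete quasi-pseudometric space. Let $J:X\to X$ be a continuous single-valued map such that $r\,d(x,y)\le d(Jx,Jy)$ for all $x,y\in X$, for some constant $r>0$. Let $F:X\to CB(X)$ be a set-valued map such that $$H(Fx,Fy)\le \alpha\big[d(Jx,Fy)+d(Fx,Jy)\big]\quad\text{for all }x,y\in X,$$ where $0<\alpha<1/2$ and $2r\alpha<1$. Then there exists a unique $x_0\in X$ which is both a startpoint and an endpoint of $J$ and $F$ if and only if $J$ and $F$ have the approximate mix-point property.
   Context: A quasi-pseudometric on a nonempty set $X$ is a map $d:X\times X\to[0,\infty)$ with $d(x,x)=0$ and $d(x,z)\le d(x,y)+d(y,z)$ for all $x,y,z$; it is $T_0$ if $d(x,y)=0=d(y,x)$ implies $x=y$. Write $d^s(x,y)=\max\{d(x,y),d(y,x)\}$. The space $(X,d)$ is bicomplete if $d$ is $T_0$ and the metric $d^s$ is complete. For $x\in X$ and nonempty $A\subseteq X$: $d(x,A)=\inf_{a\in A}d(x,a)$, $d(A,x)=\inf_{a\in A}d(a,x)$. For nonempty $A,B\subseteq X$: $H(A,B)=\max\{\sup_{a\in A}d(a,B),\ \sup_{b\in B}d(A,b)\}$. $CB(X)$ denotes the family of nonempty $d^s$-bounded, $\tau(d^s)$-closed subsets of $X$; continuity of $J$ is with respect to $\tau(d^s)$. For $J:X\to X$ and $F:X\to 2^X$, a point $x$ is a startpoint of $J$ and $F$ if $H(\{Jx\},Fx)=0$ and an endpoint of $J$ and $F$ if $H(Fx,\{Jx\})=0$. $J$ and $F$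 have the approximate mix-point property if $\inf_{x\in X}\sup_{y\in Fx}d^s(Jx,y)=0$. *)

From Stdlib Require Import Reals Lra ClassicalEpsilon.
Open Scope R_scope.

Definition is_inf (P : R -> Prop) (m : R) : Prop :=
  (forall y, P y -> m <= y) /\ (forall m', (forall y, P y -> m' <= y) -> m' <= m).

(* inf and sup of a set of reals (chosen classically; meaningful when they exist) *)
Definition Rinf (P : R -> Prop) : R := epsilon (inhabits 0) (fun m => is_inf P m).
Definition Rsup (P : R -> Prop) : R := epsilon (inhabits 0) (fun m => is_lub P m).

Section QPM.
Context {X : Type}.

Definition quasi_pseudometric (d : X -> X -> R) : Prop :=
  (forall x y, 0 <= d x y) /\ (forall x, d x x = 0) /\
  (forall x y z, d x z <= d x y + d y z).

Definition T0 (d : X -> X -> R) : Prop :=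
  forall x y, d x y = 0 -> d y x = 0 -> x = y.

Definition ds (d : X -> X -> R) (x y : X) : R := Rmax (d x y) (d y x).

Definition ds_cauchy (d : X -> X -> R) (u : nat -> X) : Prop :=
  forall eps, 0 < eps -> exists N, forall m n, (N <= m)%nat -> (N <= n)%nat ->
    ds d (u m) (u n) < eps.

Definition ds_converges (d : X -> X -> R) (u : nat -> X) (x : X) : Prop :=
  forall eps, 0 < eps -> exists N, forall n, (N <= n)%nat -> ds d (u n) x < eps.

Definition bicomplete (d : X -> X -> R) : Prop :=
  T0 d /\ forall u, ds_cauchy d u -> exists x, ds_converges d u x.

Definition dpt_set (d : X -> X -> R) (x : X) (A : X -> Prop) : R :=
  Rinf (fun t => exists a, A a /\ t = d x a).
Definition dset_pt (d : X -> X -> R) (A : X -> Prop) (x : X) : R :=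
  Rinf (fun t => exists a, A a /\ t = d a x).
Definition Haus (d : X -> X -> R) (A B : X -> Prop) : R :=
  Rmax (Rsup (fun t => exists a, A a /\ t = dpt_set d a B))
       (Rsup (fun t => exists b, B b /\ t = dset_pt d A b)).

Definition ds_bounded (d : X -> X -> R) (A : X -> Prop) : Prop :=
  exists M, forall a b, A a -> A b -> ds d a b <= M.
Definition ds_closed (d : X -> X -> R) (A : X -> Prop) : Prop :=
  forall x, (forall eps, 0 < eps -> exists a, A a /\ ds d x a < eps) -> A x.
Definition CB (d : X -> X -> R) (A : X -> Prop) : Prop :=
  (exists a, A a) /\ ds_bounded d A /\ ds_closed d A.

Definition ds_continuous (d : X -> X -> R) (J : X -> X) : Prop :=
  forall x eps, 0 < eps -> exists delta, 0 < delta /\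
    forall y, ds d x y < delta -> ds d (J x) (J y) < eps.

Definition singleton (y : X) : X -> Prop := fun z => z = y.

Definition startpoint (d : X -> X -> R) (J : X -> X) (F : X -> X -> Prop) (x : X) : Prop :=
  Haus d (singleton (J x)) (F x) = 0.
Definition endpoint (d : X -> X -> R) (J : X -> X) (F : X -> X -> Prop) (x : X) : Prop :=
  Haus d (F x) (singleton (J x)) = 0.

Definition approx_mix_point (d : X -> X -> R) (J : X -> X) (F : X -> X -> Prop) : Prop :=
  Rinf (fun t => exists x, t = Rsup (fun s => exists y, F x y /\ s = ds d (J x) y)) = 0.

End QPM.

(* Write g x for the d^s-radius sup_{y in Fx} d^s(Jx, y) of Fx about Jx.  Then x is a start- and
   endpoint iff g x = 0, and the approximate mix-point property says inf g = 0.  Comparing Jx, Jx'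
   through points of Fx, Fx' that almost realize H(Fx, Fx'), the contraction condition gives
   (1 - 2a) d(Jx, Jx') <= (1 + a)(g x + g x'); with r d <= d o J, a sequence with g(u_n) -> 0 is
   therefore d^s-Cauchy.  For y in Fx0, where x0 is its limit, the same comparison with Fu_n gives
   (1 - a) d^s(Jx0, y) <= 2 d^s(Jx0, Ju_n) + 2 g(u_n), which vanishes by continuity of J.
   If g u = g v = 0 then Fu = {Ju} and Fv = {Jv} by T0, and the contraction condition reads
   d(Ju, Jv) <= 2a d(Ju, Jv), whence uniqueness. *)
From Stdlib Require Import Reals Lra ClassicalEpsilon Classical Lia.
Open Scope R_scope.

Lemma is_inf_unique P m1 m2 : is_inf P m1 -> is_inf P m2 -> m1 = m2.
Proof. intros [H1 H2] [H3 H4]. apply Rle_antisym; [apply H4 | apply H2]; assumption. Qed.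

Lemma Rinf_is_inf P L : (exists y, P y) -> (forall y, P y -> L <= y) -> is_inf P (Rinf P).
Proof.
  intros [y0 Hy0] HL. unfold Rinf. apply epsilon_spec.
  destruct (completeness (fun t => P (- t))) as [m [Hm1 Hm2]].
  - exists (- L). intros t Ht. specialize (HL _ Ht). lra.
  - exists (- y0). rewrite Ropp_involutive. exact Hy0.
  - exists (- m). split.
    + intros y Hy. assert (- y <= m) by (apply Hm1; rewrite Ropp_involutive; exact Hy). lra.
    + intros m' Hm'. assert (m <= - m').
      { apply Hm2. intros t Ht. specialize (Hm' _ Ht). lra. }
      lra.
Qed.

Lemma is_inf_approx P m eps : is_inf P m -> 0 < eps -> exists y, P y /\ y < m + eps.
Proof.
  intros [_ Hglb] He. apply NNPP. intros Hn.
  assert (m + eps <= m); [|lra].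
  apply Hglb. intros y Hy. apply Rnot_lt_le. intros Hlt. apply Hn. eauto.
Qed.

Lemma Rsup_is_lub P U : (exists y, P y) -> (forall y, P y -> y <= U) -> is_lub P (Rsup P).
Proof.
  intros Hne HU. unfold Rsup. apply epsilon_spec.
  destruct (completeness P) as [m Hm]; [exists U; exact HU | exact Hne | eauto].
Qed.

Definition vanishing (a : nat -> R) : Prop :=
  forall eps, 0 < eps -> exists N, forall n, (N <= n)%nat -> a n < eps.

Lemma vanishing_inv_INR_succ : vanishing (fun n => / INR (S n)).
Proof.
  intros eps Heps. destruct (archimed_cor1 eps Heps) as [N [HN HN0]].
  exists N. intros n Hn. eapply Rle_lt_trans; [|exact HN].
  apply Rinv_le_contravar; [apply lt_0_INR; exact HN0 | apply le_INR; lia].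
Qed.

Lemma vanishing_add a b : vanishing a -> vanishing b -> vanishing (fun n => a n + b n).
Proof.
  intros Ha Hb eps Heps.
  destruct (Ha (eps / 2)) as [Na HNa]; [lra|]. destruct (Hb (eps / 2)) as [Nb HNb]; [lra|].
  exists (Nat.max Na Nb). intros n Hn.
  specialize (HNa n ltac:(lia)). specialize (HNb n ltac:(lia)). lra.
Qed.

Lemma vanishing_scale c a : 0 < c -> vanishing a -> vanishing (fun n => c * a n).
Proof.
  intros Hc Ha eps Heps. destruct (Ha (eps / c)) as [N HN]; [apply Rdiv_lt_0_compat; lra|].
  exists N. intros n Hn. specialize (HN n Hn).
  apply Rmult_lt_compat_l with (r := c) in HN; [|lra].
  replace (c * (eps / c)) with eps in HN by (field; lra). exact HN.
Qed.

Lemma le_vanishing_nonpos u a : (forall n, u <= a n) -> vanishing a -> u <= 0.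
Proof.
  intros Hu Ha. apply Rnot_lt_le. intros Hpos.
  destruct (Ha u Hpos) as [N HN]. specialize (HN N (le_n N)). specialize (Hu N). lra.
Qed.

Lemma Rinf_range_eq0_iff {X : Type} (f : X -> R) : inhabited X -> (forall x, 0 <= f x) ->
  Rinf (fun t => exists x, t = f x) = 0 <-> exists u : nat -> X, vanishing (fun n => f (u n)).
Proof.
  intros [x0] Hf.
  assert (Hinf : is_inf (fun t => exists x, t = f x) (Rinf (fun t => exists x, t = f x))).
  { apply Rinf_is_inf with 0; [exists (f x0); eauto|]. intros t [x ->]. apply Hf. }
  split.
  - intros H0. rewrite H0 in Hinf.
    assert (Happrox : forall n, exists x, f x < / INR (S n)).
    { intros n. assert (0 < / INR (S n)) by (apply Rinv_0_lt_compat, lt_0_INR; lia).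
      destruct (is_inf_approx _ _ _ Hinf H) as [t [[x ->] Ht]]. exists x. lra. }
    destruct (choice _ Happrox) as [u Hu]. exists u.
    intros eps Heps. destruct (vanishing_inv_INR_succ eps Heps) as [N HN].
    exists N. intros n Hn. specialize (HN n Hn). specialize (Hu n). lra.
  - intros [u Hu]. apply (is_inf_unique _ _ _ Hinf). split.
    + intros t [x ->]. apply Hf.
    + intros m Hm. apply (le_vanishing_nonpos _ _ (fun n => Hm _ (ex_intro _ (u n) eq_refl)) Hu).
Qed.

Section QuasiPseudometric.
Context {X : Type} (d : X -> X -> R).
Hypothesis hq : quasi_pseudometric d.

Lemma d_nonneg x y : 0 <= d x y.
Proof. apply hq. Qed.

Lemma d_refl x : d x x = 0.
Proof. apply hq. Qed.

Lemma d_triangle x y z : d x z <= d x y + d y z.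
Proof. apply hq. Qed.

Lemma ds_ge_l x y : d x y <= ds d x y.
Proof. apply Rmax_l. Qed.

Lemma ds_ge_r x y : d y x <= ds d x y.
Proof. apply Rmax_r. Qed.

Lemma ds_sym x y : ds d x y = ds d y x.
Proof. apply Rmax_comm. Qed.

Lemma ds_nonneg x y : 0 <= ds d x y.
Proof. pose proof (d_nonneg x y). pose proof (ds_ge_l x y). lra. Qed.

Lemma ds_triangle x y z : ds d x z <= ds d x y + ds d y z.
Proof.
  pose proof (d_triangle x y z). pose proof (d_triangle z y x).
  pose proof (ds_ge_l x y). pose proof (ds_ge_r x y).
  pose proof (ds_ge_l y z). pose proof (ds_ge_r y z).
  apply Rmax_lub; lra.
Qed.

Lemma ds_le0_eq0 x y : ds d x y <= 0 -> d x y = 0 /\ d y x = 0.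
Proof.
  intros H. pose proof (ds_ge_l x y). pose proof (ds_ge_r x y).
  pose proof (d_nonneg x y). pose proof (d_nonneg y x). lra.
Qed.

Lemma dpt_set_is_inf x A : (exists a, A a) ->
  is_inf (fun t => exists a, A a /\ t = d x a) (dpt_set d x A).
Proof.
  intros [a Ha]. apply Rinf_is_inf with 0; [exists (d x a); eauto|].
  intros t [b [_ ->]]. apply d_nonneg.
Qed.

Lemma dpt_set_le x A a : A a -> dpt_set d x A <= d x a.
Proof. intros Ha. apply (dpt_set_is_inf x A (ex_intro _ a Ha)). eauto. Qed.

Lemma dpt_set_ge x A c : (exists a, A a) -> (forall a, A a -> c <= d x a) -> c <= dpt_set d x A.
Proof. intros Hne Hc. apply (dpt_set_is_inf x A Hne). intros t [a [Ha ->]]. auto. Qed.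

Lemma dpt_set_approx x A eps : (exists a, A a) -> 0 < eps ->
  exists a, A a /\ d x a < dpt_set d x A + eps.
Proof.
  intros Hne He.
  destruct (is_inf_approx _ _ _ (dpt_set_is_inf x A Hne) He) as [t [[a [Ha ->]] Ht]]. eauto.
Qed.

Lemma dset_pt_is_inf A x : (exists a, A a) ->
  is_inf (fun t => exists a, A a /\ t = d a x) (dset_pt d A x).
Proof.
  intros [a Ha]. apply Rinf_is_inf with 0; [exists (d a x); eauto|].
  intros t [b [_ ->]]. apply d_nonneg.
Qed.

Lemma dset_pt_le A x a : A a -> dset_pt d A x <= d a x.
Proof. intros Ha. apply (dset_pt_is_inf A x (ex_intro _ a Ha)). eauto. Qed.

Lemma dset_pt_ge A x c : (exists a, A a) -> (forall a, A a -> c <= d a x) -> c <= dset_pt d A x.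
Proof. intros Hne Hc. apply (dset_pt_is_inf A x Hne). intros t [a [Ha ->]]. auto. Qed.

Lemma dset_pt_approx A x eps : (exists a, A a) -> 0 < eps ->
  exists a, A a /\ d a x < dset_pt d A x + eps.
Proof.
  intros Hne He.
  destruct (is_inf_approx _ _ _ (dset_pt_is_inf A x Hne) He) as [t [[a [Ha ->]] Ht]]. eauto.
Qed.

Definition nonempty_bounded (A : X -> Prop) : Prop := (exists a, A a) /\ ds_bounded d A.

Lemma CB_nonempty_bounded A : CB d A -> nonempty_bounded A.
Proof. intros [Hne [Hb _]]. split; assumption. Qed.

Lemma singleton_nonempty_bounded x : nonempty_bounded (singleton x).
Proof.
  split; [exists x; reflexivity|]. exists 0. intros a b -> ->.
  unfold ds. rewrite d_refl. apply Rmax_lub; lra.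
Qed.

Section Hausdorff.
Variables A B : X -> Prop.
Hypotheses (hA : nonempty_bounded A) (hB : nonempty_bounded B).

Lemma Haus_lub_dpt_set :
  is_lub (fun t => exists a, A a /\ t = dpt_set d a B)
         (Rsup (fun t => exists a, A a /\ t = dpt_set d a B)).
Proof.
  destruct hA as [[a0 Ha0] [MA HMA]], hB as [[b0 Hb0] _].
  apply Rsup_is_lub with (MA + d a0 b0); [exists (dpt_set d a0 B); eauto|].
  intros t [a [Ha ->]]. pose proof (dpt_set_le a B b0 Hb0). pose proof (d_triangle a a0 b0).
  pose proof (ds_ge_l a a0). pose proof (HMA a a0 Ha Ha0). lra.
Qed.

Lemma Haus_lub_dset_pt :
  is_lub (fun t => exists b, B b /\ t = dset_pt d A b)
         (Rsup (fun t => exists b, B b /\ t = dset_pt d A b)).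
Proof.
  destruct hA as [[a0 Ha0] _], hB as [[b0 Hb0] [MB HMB]].
  apply Rsup_is_lub with (d a0 b0 + MB); [exists (dset_pt d A b0); eauto|].
  intros t [b [Hb ->]]. pose proof (dset_pt_le A b a0 Ha0). pose proof (d_triangle a0 b0 b).
  pose proof (ds_ge_l b0 b). pose proof (HMB b0 b Hb0 Hb). lra.
Qed.

Lemma Haus_ge_dpt_set a : A a -> dpt_set d a B <= Haus d A B.
Proof.
  intros Ha. eapply Rle_trans; [|apply Rmax_l]. apply Haus_lub_dpt_set. eauto.
Qed.

Lemma Haus_ge_dset_pt b : B b -> dset_pt d A b <= Haus d A B.
Proof.
  intros Hb. eapply Rle_trans; [|apply Rmax_r]. apply Haus_lub_dset_pt. eauto.
Qed.

Lemma Haus_le c : (forall a, A a -> dpt_set d a B <= c) -> (forall b, B b -> dset_pt d A b <= c) ->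
  Haus d A B <= c.
Proof.
  intros H1 H2. apply Rmax_lub.
  - apply Haus_lub_dpt_set. intros t [a [Ha ->]]. auto.
  - apply Haus_lub_dset_pt. intros t [b [Hb ->]]. auto.
Qed.

End Hausdorff.

Lemma Haus_nonneg A B : nonempty_bounded A -> nonempty_bounded B -> 0 <= Haus d A B.
Proof.
  intros hA hB. destruct (proj1 hA) as [a Ha].
  eapply Rle_trans; [|exact (Haus_ge_dpt_set A B hA hB a Ha)].
  apply dpt_set_ge; [apply hB|]. intros; apply d_nonneg.
Qed.

Lemma Haus_singleton_eq0 p A : nonempty_bounded A ->
  Haus d (singleton p) A = 0 /\ Haus d A (singleton p) = 0 <-> forall b, A b -> ds d p b = 0.
Proof.
  intros hA. pose proof (singleton_nonempty_bounded p) as hp.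
  assert (Hp : exists a, singleton p a) by (exists p; reflexivity).
  split.
  - intros [Hl Hr] b Hb. apply Rle_antisym; [|apply ds_nonneg]. apply Rmax_lub.
    + rewrite <- Hl. eapply Rle_trans; [|apply (Haus_ge_dset_pt _ _ hp hA b Hb)].
      apply dset_pt_ge; [exact Hp|]. intros a ->. lra.
    + rewrite <- Hr. eapply Rle_trans; [|apply (Haus_ge_dpt_set _ _ hA hp b Hb)].
      apply dpt_set_ge; [exact Hp|]. intros a ->. lra.
  - intros H0. destruct (proj1 hA) as [b0 Hb0].
    split; apply Rle_antisym; try (apply Haus_nonneg; assumption); apply Haus_le; try assumption.
    + intros a ->. pose proof (dpt_set_le p A b0 Hb0). pose proof (ds_ge_l p b0).
      specialize (H0 b0 Hb0). lra.
    + intros b Hb. pose proof (dset_pt_le (singleton p) b p eq_refl). pose proof (ds_ge_l p b).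
      specialize (H0 b Hb). lra.
    + intros b Hb. pose proof (dpt_set_le b (singleton p) p eq_refl). pose proof (ds_ge_r p b).
      specialize (H0 b Hb). lra.
    + intros a ->. pose proof (dset_pt_le A p b0 Hb0). pose proof (ds_ge_r p b0).
      specialize (H0 b0 Hb0). lra.
Qed.

Definition ds_radius (p : X) (A : X -> Prop) : R := Rsup (fun s => exists y, A y /\ s = ds d p y).

Lemma ds_radius_is_lub p A : nonempty_bounded A ->
  is_lub (fun s => exists y, A y /\ s = ds d p y) (ds_radius p A).
Proof.
  intros [[y0 Hy0] [M HM]]. apply Rsup_is_lub with (ds d p y0 + M); [exists (ds d p y0); eauto|].
  intros t [y [Hy ->]]. pose proof (ds_triangle p y0 y). pose proof (HM y0 y Hy0 Hy). lra.
Qed.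

Lemma ds_le_radius p A y : nonempty_bounded A -> A y -> ds d p y <= ds_radius p A.
Proof. intros hA Hy. apply (ds_radius_is_lub p A hA). eauto. Qed.

Lemma ds_radius_nonneg p A : nonempty_bounded A -> 0 <= ds_radius p A.
Proof.
  intros hA. destruct (proj1 hA) as [y Hy].
  pose proof (ds_nonneg p y). pose proof (ds_le_radius p A y hA Hy). lra.
Qed.

Lemma ds_radius_eq0 p A : nonempty_bounded A -> ds_radius p A = 0 <-> forall y, A y -> ds d p y = 0.
Proof.
  intros hA. split.
  - intros H0 y Hy. pose proof (ds_le_radius p A y hA Hy). pose proof (ds_nonneg p y). lra.
  - intros H0. apply Rle_antisym; [|apply ds_radius_nonneg; exact hA].
    apply (ds_radius_is_lub p A hA). intros t [y [Hy ->]]. rewrite H0 by exact Hy. lra.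
Qed.

Lemma startpoint_endpoint_iff (J : X -> X) (F : X -> X -> Prop) x :
  nonempty_bounded (F x) ->
  startpoint d J F x /\ endpoint d J F x <-> ds_radius (J x) (F x) = 0.
Proof.
  intros hF. unfold startpoint, endpoint. rewrite Haus_singleton_eq0, ds_radius_eq0 by exact hF.
  tauto.
Qed.

Lemma vanishing_ds_continuous (J : X -> X) (u : nat -> X) x :
  ds_continuous d J -> ds_converges d u x -> vanishing (fun n => ds d (J x) (J (u n))).
Proof.
  intros hJ hu eps Heps. destruct (hJ x eps Heps) as [delta [Hdelta HJ]].
  destruct (hu delta Hdelta) as [N HN]. exists N. intros n Hn.
  apply HJ. rewrite ds_sym. exact (HN n Hn).
Qed.

Section Contraction.
Variables (J : X -> X) (F : X -> X -> Prop) (alpha : R).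
Hypotheses (hF : forall x, nonempty_bounded (F x)) (halpha : 0 < alpha) (halpha2 : alpha < 1 / 2).
Hypothesis hH : forall x y,
  Haus d (F x) (F y) <= alpha * (dpt_set d (J x) (F y) + dset_pt d (F x) (J y)).

Local Notation radius x := (ds_radius (J x) (F x)).

Lemma d_J_le_radius x x' : (1 - 2 * alpha) * d (J x) (J x') <= (1 + alpha) * (radius x + radius x').
Proof.
  set (D := d (J x) (J x')).
  enough (D <= (1 + alpha) * (radius x + radius x') + 2 * alpha * D) by lra.
  apply Rle_plus_epsilon. intros eps Heps.
  (* Go from Jx to Jx' through y in Fx and z in Fx' with d y z <= H(Fx, Fx') + eps. *)
  destruct (proj1 (hF x)) as [y Hy].
  destruct (dpt_set_approx y (F x') eps (proj1 (hF x')) Heps) as [z [Hz Hyz]].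
  pose proof (Haus_ge_dpt_set _ _ (hF x) (hF x') y Hy).
  pose proof (hH x x').
  pose proof (dpt_set_le (J x) (F x') z Hz). pose proof (dset_pt_le (F x) (J x') y Hy).
  pose proof (d_triangle (J x) (J x') z). pose proof (d_triangle y (J x) (J x')).
  pose proof (d_triangle (J x) y (J x')). pose proof (d_triangle y z (J x')).
  pose proof (ds_le_radius (J x) (F x) y (hF x) Hy).
  pose proof (ds_le_radius (J x') (F x') z (hF x') Hz).
  pose proof (ds_ge_l (J x) y). pose proof (ds_ge_r (J x) y).
  pose proof (ds_ge_l (J x') z). pose proof (ds_ge_r (J x') z).
  assert (alpha * (dpt_set d (J x) (F x') + dset_pt d (F x) (J x'))
          <= alpha * (2 * D + radius x + radius x'))
    by (apply Rmult_le_compat_l; unfold D in *; lra).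
  unfold D in *. lra.
Qed.

Lemma d_J_fiber_le_l x0 x y : F x0 y ->
  d (J x0) y <= ds d (J x0) (J x) + radius x
                + alpha * (2 * ds d (J x0) (J x) + radius x + d (J x0) y).
Proof.
  intros Hy. set (e := ds d (J x0) (J x)). set (D := d (J x0) y).
  apply Rle_plus_epsilon. intros eps Heps.
  (* Go from Jx0 to y through Jx and z in Fx with d z y <= H(Fx, Fx0) + eps. *)
  destruct (dset_pt_approx (F x) y eps (proj1 (hF x)) Heps) as [z [Hz Hzy]].
  pose proof (Haus_ge_dset_pt _ _ (hF x) (hF x0) y Hy).
  pose proof (hH x x0).
  pose proof (dpt_set_le (J x) (F x0) y Hy). pose proof (dset_pt_le (F x) (J x0) z Hz).
  pose proof (d_triangle (J x) (J x0) y). pose proof (d_triangle z (J x) (J x0)).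
  pose proof (d_triangle (J x0) (J x) y). pose proof (d_triangle (J x) z y).
  pose proof (ds_le_radius (J x) (F x) z (hF x) Hz).
  pose proof (ds_ge_l (J x) z). pose proof (ds_ge_r (J x) z).
  pose proof (ds_ge_l (J x0) (J x)). pose proof (ds_ge_r (J x0) (J x)).
  assert (alpha * (dpt_set d (J x) (F x0) + dset_pt d (F x) (J x0))
          <= alpha * (2 * e + radius x + D)) by (apply Rmult_le_compat_l; unfold D, e in *; lra).
  unfold D, e in *. lra.
Qed.

Lemma d_J_fiber_le_r x0 x y : F x0 y ->
  d y (J x0) <= ds d (J x0) (J x) + radius x
                + alpha * (2 * ds d (J x0) (J x) + radius x + d y (J x0)).
Proof.
  intros Hy. set (e := ds d (J x0) (J x)). set (D := d y (J x0)).
  apply Rle_plus_epsilon. intros eps Heps.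
  (* Go from y to Jx0 through z in Fx with d y z <= H(Fx0, Fx) + eps, and Jx. *)
  destruct (dpt_set_approx y (F x) eps (proj1 (hF x)) Heps) as [z [Hz Hyz]].
  pose proof (Haus_ge_dpt_set _ _ (hF x0) (hF x) y Hy).
  pose proof (hH x0 x).
  pose proof (dpt_set_le (J x0) (F x) z Hz). pose proof (dset_pt_le (F x0) (J x) y Hy).
  pose proof (d_triangle (J x0) (J x) z). pose proof (d_triangle y (J x0) (J x)).
  pose proof (d_triangle y z (J x0)). pose proof (d_triangle z (J x) (J x0)).
  pose proof (ds_le_radius (J x) (F x) z (hF x) Hz).
  pose proof (ds_ge_l (J x) z). pose proof (ds_ge_r (J x) z).
  pose proof (ds_ge_l (J x0) (J x)). pose proof (ds_ge_r (J x0) (J x)).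
  assert (alpha * (dpt_set d (J x0) (F x) + dset_pt d (F x0) (J x))
          <= alpha * (2 * e + radius x + D)) by (apply Rmult_le_compat_l; unfold D, e in *; lra).
  unfold D, e in *. lra.
Qed.

Lemma ds_J_fiber_le x0 x y : F x0 y ->
  (1 - alpha) * ds d (J x0) y <= 2 * ds d (J x0) (J x) + 2 * radius x.
Proof.
  intros Hy. pose proof (d_J_fiber_le_l x0 x y Hy). pose proof (d_J_fiber_le_r x0 x y Hy).
  pose proof (ds_nonneg (J x0) (J x)). pose proof (ds_radius_nonneg (J x) (F x) (hF x)).
  unfold ds at 1. apply Rmax_case_strong; intros _; nra.
Qed.

Lemma fiber_eq_of_radius_eq0 (hT : T0 d) x b : radius x = 0 -> F x b -> b = J x.
Proof.
  intros Hx Hb. rewrite ds_radius_eq0 in Hx by apply hF.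
  destruct (ds_le0_eq0 (J x) b) as [H1 H2]; [rewrite (Hx b Hb); lra|].
  symmetry. apply hT; assumption.
Qed.

Lemma d_J_eq0_of_radius_eq0 (hT : T0 d) u v : radius u = 0 -> radius v = 0 -> d (J u) (J v) = 0.
Proof.
  intros Hu Hv.
  assert (HJ : forall x, radius x = 0 -> F x (J x)).
  { intros x Hx. destruct (proj1 (hF x)) as [b Hb].
    rewrite <- (fiber_eq_of_radius_eq0 hT x b Hx Hb). exact Hb. }
  assert (d (J u) (J v) <= dpt_set d (J u) (F v)).
  { apply dpt_set_ge; [apply hF|]. intros b Hb.
    rewrite (fiber_eq_of_radius_eq0 hT v b Hv Hb). lra. }
  pose proof (Haus_ge_dpt_set _ _ (hF u) (hF v) (J u) (HJ u Hu)).
  pose proof (hH u v).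
  pose proof (dpt_set_le (J u) (F v) (J v) (HJ v Hv)).
  pose proof (dset_pt_le (F u) (J v) (J u) (HJ u Hu)).
  pose proof (d_nonneg (J u) (J v)).
  assert (alpha * (dpt_set d (J u) (F v) + dset_pt d (F u) (J v)) <= alpha * (2 * d (J u) (J v)))
    by (apply Rmult_le_compat_l; lra).
  nra.
Qed.

Lemma radius_eq0_of_vanishing x0 u :
  vanishing (fun n => ds d (J x0) (J (u n))) -> vanishing (fun n => radius (u n)) -> radius x0 = 0.
Proof.
  intros He Hg. apply ds_radius_eq0; [apply hF|]. intros y Hy.
  assert ((1 - alpha) * ds d (J x0) y <= 0).
  { apply (le_vanishing_nonpos _ (fun n => 2 * ds d (J x0) (J (u n)) + 2 * radius (u n))).
    - intros n. apply ds_J_fiber_le. exact Hy.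
    - apply vanishing_add; apply vanishing_scale; auto; lra. }
  pose proof (ds_nonneg (J x0) y). nra.
Qed.

Variable r : R.
Hypotheses (hr : 0 < r) (hJr : forall x y, r * d x y <= d (J x) (J y)).

Lemma radius_eq0_unique (hT : T0 d) x0 x1 : radius x0 = 0 -> radius x1 = 0 -> x0 = x1.
Proof.
  intros H0 H1.
  pose proof (d_J_eq0_of_radius_eq0 hT x0 x1 H0 H1).
  pose proof (d_J_eq0_of_radius_eq0 hT x1 x0 H1 H0).
  pose proof (hJr x0 x1). pose proof (hJr x1 x0).
  pose proof (d_nonneg x0 x1). pose proof (d_nonneg x1 x0).
  apply hT; nra.
Qed.

Lemma ds_le_radius_sum x x' :
  (1 - 2 * alpha) * r * ds d x x' <= (1 + alpha) * (radius x + radius x').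
Proof.
  pose proof (d_J_le_radius x x'). pose proof (d_J_le_radius x' x).
  pose proof (hJr x x'). pose proof (hJr x' x).
  unfold ds. apply Rmax_case_strong; intros _; nra.
Qed.

Lemma ds_cauchy_of_vanishing_radius u : vanishing (fun n => radius (u n)) -> ds_cauchy d u.
Proof.
  intros Hg eps Heps.
  assert (Hc : 0 < (1 - 2 * alpha) * r) by (apply Rmult_lt_0_compat; lra).
  set (delta := (1 - 2 * alpha) * r * eps / (2 * (1 + alpha))).
  assert (Hdelta : 2 * (1 + alpha) * delta = (1 - 2 * alpha) * r * eps)
    by (unfold delta; field; lra).
  destruct (Hg delta) as [N HN]; [unfold delta; apply Rdiv_lt_0_compat; nra|].
  exists N. intros m n Hm Hn.
  pose proof (ds_le_radius_sum (u m) (u n)). pose proof (HN m Hm). pose proof (HN n Hn).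
  apply Rmult_lt_reg_l with ((1 - 2 * alpha) * r); [exact Hc|]. nra.
Qed.

End Contraction.
End QuasiPseudometric.

Theorem mainTheorem8 (X : Type) (d : X -> X -> R) (J : X -> X) (F : X -> X -> Prop)
  (r alpha : R) :
  inhabited X -> quasi_pseudometric d -> bicomplete d ->
  ds_continuous d J ->
  0 < r -> (forall x y, r * d x y <= d (J x) (J y)) ->
  (forall x, CB d (F x)) ->
  0 < alpha -> alpha < 1 / 2 -> 2 * r * alpha < 1 ->
  (forall x y, Haus d (F x) (F y) <=
     alpha * (dpt_set d (J x) (F y) + dset_pt d (F x) (J y))) ->
  ((exists! x0, startpoint d J F x0 /\ endpoint d J F x0) <->
   approx_mix_point d J F).
Proof.
  intros hX hq [hT hcomplete] hJc hr hJr hCB ha ha2 _ hH.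
  assert (hF : forall x, nonempty_bounded d (F x)) by (intros x; apply CB_nonempty_bounded, hCB).
  change ((exists! x0, startpoint d J F x0 /\ endpoint d J F x0) <->
          Rinf (fun t => exists x, t = ds_radius d (J x) (F x)) = 0).
  rewrite Rinf_range_eq0_iff
    by (exact hX || intros x; apply (ds_radius_nonneg d hq), hF).
  split.
  - intros [x0 [Hx0 _]]. exists (fun _ => x0). intros eps Heps. exists 0%nat. intros n _.
    rewrite (proj1 (startpoint_endpoint_iff d hq J F x0 (hF x0)) Hx0). exact Heps.
  - intros [u Hu].
    destruct (hcomplete u (ds_cauchy_of_vanishing_radius d hq J F alpha hF ha ha2 hH r hr hJr u Hu))
      as [x0 Hx0].
    pose proof (radius_eq0_of_vanishing d hq J F alpha hF ha ha2 hH x0 u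
                  (vanishing_ds_continuous d J u x0 hJc Hx0) Hu) as H0.
    exists x0. split; [apply startpoint_endpoint_iff; auto|].
    intros x1 Hx1. apply (radius_eq0_unique d hq J F alpha hF ha ha2 hH r hr hJr hT); auto.
    apply startpoint_endpoint_iff; auto.
Qed.
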